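(* Let $f\in\mathcal{C}(\mathbb{R}^{\mathbb{N}})$ and $x_{0}\in\mathbb{R}^{\mathbb{N}}$ such that $f(x_{0})\neq 0$. Then, $f\notin L^{p}(\mu)$ for every $1\leq p < \infty$. In particular, it holds that $\mathcal{C}(\mathbb{R}^{\mathbb{N}})\cap L^{p}(\mu)=\{0\}$ for each $1\leq p < \infty$.
   Context: $\mathcal{C}(\mathbb{R}^{\mathbb{N}})$ denotes the space of continuous functions $f:\mathbb{R}^{\mathbb{N}}\to\mathbb{R}$, where $\mathbb{R}^{\mathbb{N}}$ carries the product topology. Let $\mathcal{B}$ be the Borel $\sigma$-algebra of $\mathbb{R}$, $\lambda$ the Lebesgue measure, and $\mathcal{B}_{\infty}$ the $\sigma$-algebra on $\mathbb{R}^{\mathbb{N}}$ generated by the cylinder sets $\prod_{i=1}^{m}C_{i}\times\prod_{i=m+1}^{\infty}\mathbb{R}$ with $C_i\in\mathcal{B}$, $m\in\mathbb{N}$ (equal to the Borel $\sigma$-algebra of the product topology). Let $\mathcal{F}(\mathcal{B},\lambda)$ be the set of finite rectangles $\prod_{i\in\mathbb{N}}C_{i}$ with $C_i\in\mathcal{B}$ and $\prod_{i}\lambda(C_i)\in[0,\infty)$, with $\mathrm{vol}(\prod_{i}C_i):=\prod_i\lambda(C_i)$. The measure $\mu$ is the restriction to $\mathcal{B}_{\infty}$ of the outer measure $\mu^{\ast}(A):=\inf\{\sum_{n}\mathrm{vol}(\mathscr{C}_{n}) : \mathscr{C}_{n}\in\mathcal{F}(\mathcal{B},\lambda),\ A\subset\bigcup_{n}\mathscr{C}_{n}\}$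 ($\inf\varnothing=\infty$). *)

From HB Require Import structures.
From mathcomp Require Import all_boot all_order all_algebra.
From mathcomp Require Import all_classical all_reals all_analysis.
Set Implicit Arguments. Unset Strict Implicit. Unset Printing Implicit Defensive.
Import Order.TTheory GRing.Theory Num.Theory.
Import numFieldNormedType.Exports.
Local Open Scope classical_set_scope.
Local Open Scope ring_scope.

(* Coordinates of R^N are indexed by nat (0-based instead of 1-based). *)

Definition cylinders (R : realType) : set (set (nat -> R)) :=
  [set A | exists (m : nat) (C : nat -> set R),
      (forall i, (i < m)%N -> measurable (C i)) /\
      A = [set x | forall i, (i < m)%N -> C i (x i)]].

Definition RN (R : realType) := g_sigma_algebraType (@cylinders R).

Definition rect (R : realType) (C : nat -> set R) : set (nat -> R) :=
  [set x | forall i, C i (x i)].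

Definition pprod (R : realType) (C : nat -> set R) (n : nat) : \bar R :=
  (\prod_(i < n) (@lebesgue_measure R) (C i))%E.

Definition finite_rect (R : realType) (C : nat -> set R) : Prop :=
  (forall i, measurable (C i)) /\ exists r : R, pprod C @ \oo --> r%:E.

Definition vol (R : realType) (C : nat -> set R) : \bar R := limn (pprod C).

Definition mu_star (R : realType) (A : set (nat -> R)) : \bar R :=
  ereal_inf [set (\sum_(0 <= n <oo) vol (Cs n))%E |
    Cs in [set Cs : nat -> nat -> set R |
            (forall n, finite_rect (Cs n)) /\ A `<=` \bigcup_n rect (Cs n)]].

From HB Require Import structures.
From mathcomp Require Import all_boot all_order all_algebra.
From mathcomp Require Import all_classical all_reals all_analysis.
From mathcomp Require Import lra measurable_realfun.
Import Order.TTheory GRing.Theory Num.Theory.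
Import numFieldNormedType.Exports.
Local Open Scope classical_set_scope.
Local Open Scope ring_scope.

(* Every open cylinder [cylinder_ball a m d] has infinite mu-measure.  For
   every N, a finite rectangle has a null factor or a factor of finite
   Lebesgue measure beyond coordinate N, since otherwise its partial volumes
   are eventually +oo.  Give the n-th rectangle of a countable cover such a
   factor at a coordinate k_n >= max(n, m).  The factors sitting at
   coordinate i then have summable measures (only those with n <= i can be
   non-null), all null when i < m, so a point x_i avoiding them can be found
   in R, and in ]a_i - d, a_i + d[ when i < m.  This x lies in the cylinder
   but in no rectangle of the cover.  A continuous f with
   f(x0) != 0 satisfies |f| >= |f(x0)|/2 on such a cylinder around x0, so
   the integral of |f|^p is infinite. *)

Lemma exists_notin_bigcup {d} {T : semiRingOfSetsType d} {R : realType}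
    (mu : {measure set T -> \bar R}) {A : set T} {D : nat -> set T} :
  measurable A -> (forall n, measurable (D n)) ->
  (\sum_(n <oo) mu (D n) < mu A)%E -> exists2 y, A y & forall n, ~ D n y.
Proof.
move=> mA mD DA; apply: contrapT => noy.
suff /(measure_sigma_subadditive mu mD mA) : A `<=` \bigcup_n D n.
  by rewrite leNgt DA.
move=> y Ay; apply: contrapT => notD; apply: noy; exists y => // n Dny.
by apply: notD; exists n.
Qed.

Lemma Lfun_measure_ge_lty {d} {T : measurableType d} {R : realType}
    (mu : {measure set T -> \bar R}) {p c : R} {f : T -> R} {A : set T} :
  1 <= p -> 0 < c -> f \in Lfun mu p%:E -> measurable A ->
  (forall x, A x -> c <= `|f x|) -> (mu A < +oo)%E.
Proof.
move=> p1 c0 Lf mA cf.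
have /integrableP [mfp fp_lty] := Lfun_integrable p1 Lf.
have p0 : 0 <= p by rewrite (le_trans _ p1).
have cA_le : ((c `^ p)%:E * mu A <= \int[mu]_(x in A) `|(`|f x| `^ p)%:E|)%E.
  rewrite -integral_cst //; apply: ge0_le_integral => //.
  - by move=> x _; rewrite lee_fin powR_ge0.
  - exact/measurable_funTS/measurableT_comp.
  - move=> x Ax; rewrite gee0_abs ?lee_fin ?powR_ge0 //.
    by rewrite ge0_ler_powR ?nnegrE ?(ltW c0) ?cf.
have cA_lty : ((c `^ p)%:E * mu A < +oo)%E.
  apply: le_lt_trans cA_le (le_lt_trans _ fp_lty).
  apply: ge0_subset_integral => //.
  exact: measurableT_comp.
rewrite ltey; apply/eqP => muA.
by move: cA_lty; rewrite muA muleC gt0_mulye ?ltxx // lte_fin powR_gt0.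
Qed.

Definition cylinder_ball {R : realType} (a : nat -> R) (m : nat) (d : R) :
  set (nat -> R) := [set x | forall i, (i < m)%N -> `|x i - a i| < d].

Lemma ptws_nbhs_cylinder_ball (R : realType) (a : nat -> R)
    (A : set (nat -> R)) :
  nbhs (a : {ptws nat -> R}) A ->
  exists m, exists2 d, 0 < d & cylinder_ball a m d `<=` A.
Proof.
move=> Aa; apply: contrapT => /forallNP noball.
have /choice [x xP] :
    forall n, exists x, cylinder_ball a n n.+1%:R^-1 x /\ ~ A x.
  move=> n; apply: contrapT => /forallNP nox; apply: (noball n).
  exists n.+1%:R^-1 => // y ya; apply: contrapT => nAy.
  by apply: (nox y).
have : {ptws, x @ \oo --> a}.
  apply/pointwise_cvgP => t; apply/cvgrPdist_lt => e e0; rewrite !near_map.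
  near=> n.
  rewrite distrC; apply: lt_trans (_ : n.+1%:R^-1 < e).
    by apply: (xP n).1; near: n; exact: nbhs_infty_gt.
  by near: n; exact: (near_infty_natSinv_lt (PosNum e0)).
move=> /(_ A Aa) [N _ xA].
exact: (xP N).2 (xA N (leqnn N)).
Unshelve. all: by end_near. Qed.

Section finite_rectangles.
Context {R : realType}.
Local Notation lambda := (@lebesgue_measure R).

(* The null alternative is needed: 0 * +oo = 0 in \bar R, so one null factor
   makes the volume 0 whatever the other factors are. *)
Lemma finite_rect_small_factor (C : nat -> set R) (N : nat) : finite_rect C ->
  exists k, lambda (C k) = 0 \/ (N <= k)%N /\ (lambda (C k) < +oo)%E.
Proof.
move=> [_ [r pprod_r]]; apply: contrapT => /forallNP large.
have C_gt0 k : (0 < lambda (C k))%E.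
  by rewrite lt0e measure_ge0 andbT; apply/eqP => C0; apply: (large k); left.
have C_oo k : (N <= k)%N -> lambda (C k) = +oo%E.
  move=> Nk; apply/eqP; rewrite -leye_eq leNgt; apply/negP => Cfin.
  by apply: (large k); right.
have pprod_gt0 n : (0 < pprod C n)%E.
  elim: n => [|n IH]; first by rewrite /pprod big_ord0 lte01.
  by rewrite /pprod big_ord_recr /= mule_gt0.
have pprod_oo n : (N < n)%N -> pprod C n = +oo%E.
  case: n => // n; rewrite ltnS => Nn.
  rewrite /pprod big_ord_recr /= C_oo // muleC gt0_mulye //.
  exact: pprod_gt0.
have [[M _ pprod_fin] _] := (fine_cvgP _ _).1 pprod_r.
have := pprod_fin (maxn M N).+1 (leq_trans (leq_maxl M N) (leqnSn _)).
by rewrite pprod_oo // ltnS leq_maxr.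
Qed.

Lemma cylinder_ball_not_covered (a : nat -> R) (m : nat) (d : R)
    (Cs : nat -> nat -> set R) :
  0 < d -> (forall n, finite_rect (Cs n)) ->
  exists2 x, cylinder_ball a m d x & forall n, ~ rect (Cs n) x.
Proof.
move=> d0 Cs_fin.
have /choice [k k_small] : forall n, exists k, lambda (Cs n k) = 0 \/
    (maxn n m <= k)%N /\ (lambda (Cs n k) < +oo)%E.
  by move=> n; exact: finite_rect_small_factor.
pose D i n := if k n == i then Cs n i else set0.
have mD i n : measurable (D i n).
  by rewrite /D; case: eqP => [<-|_]; [exact: (Cs_fin n).1|exact: measurable0].
have D_lty i n : (lambda (D i n) < +oo)%E.
  rewrite /D; case: eqP => [<-|_]; last by rewrite measure0.
  by case: (k_small n) => [->|[]].
have D0 i n : (i < maxn n m)%N -> lambda (D i n) = 0.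
  rewrite /D; case: eqP => [<- k_lt|_ _]; last exact: measure0.
  by case: (k_small n) => // -[]; rewrite leqNgt k_lt.
pose A i := if (i < m)%N then `]a i - d, a i + d[%classic else [set: R].
have mA i : measurable (A i) by rewrite /A; case: ifP.
have DA i : (\sum_(n <oo) lambda (D i n) < lambda (A i))%E.
  rewrite /A; case: ltnP => [im|mi].
  - rewrite eseries0 => [|n _ _]; last first.
      by apply: D0; rewrite (leq_trans im) ?leq_maxr.
    rewrite lebesgue_measure_itv /= lte_fin ltrD2l gt0_cp //.
    by rewrite lte_fin subr_gt0 ltrD2l gt0_cp.
  - rewrite -set_itvNyy lebesgue_measure_itv /=.
    rewrite (nneseries_split 0 i.+1) // add0n.
    rewrite eseries0 => [|n ilt _]; last first.
      by apply: D0; rewrite (leq_trans ilt) ?leq_maxl.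
    by rewrite adde0 lte_sum_pinfty.
have /choice [x xA] : forall i, exists x, A i x /\ forall n, ~ D i n x.
  move=> i; have [y Ay Dy] := exists_notin_bigcup lambda (mA i) (mD i) (DA i).
  by exists y.
exists x => [i im|n x_in].
  by have := (xA i).1; rewrite /A im /= in_itv /= ltr_distl.
by have := (xA (k n)).2 n; rewrite /D eqxx; apply; exact: x_in.
Qed.

Lemma mu_star_cylinder_ball (a : nat -> R) (m : nat) (d : R) :
  0 < d -> mu_star (cylinder_ball a m d) = +oo%E.
Proof.
move=> d0; rewrite /mu_star; set S := (X in ereal_inf X).
suff -> : S = set0 by rewrite ereal_inf0.
apply/seteqP; split => // y [Cs [Cs_fin cover] _].
have [x xa xCs] := cylinder_ball_not_covered a m d Cs d0 Cs_fin.
by have [n _ /xCs] := cover x xa.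
Qed.

Lemma cylinder_ball_measurable (a : nat -> R) (m : nat) (d : R) :
  measurable (cylinder_ball a m d : set (RN R)).
Proof.
apply: sub_gen_smallest; exists m, (fun i => `]a i - d, a i + d[%classic).
split=> [i _|]; first exact: measurable_itv.
by apply/seteqP; split=> x /= + i im => /(_ i im); rewrite in_itv /= ltr_distl.
Qed.

End finite_rectangles.

Lemma continuous_neq0_notin_Lfun (R : realType)
    (mu : {measure set RN R -> \bar R})
    (mu_def : forall A : set (RN R), measurable A -> mu A = mu_star A)
    (f : (nat -> R) -> R) (x0 : nat -> R) :
  continuous (f : {ptws nat -> R} -> R) -> f x0 != 0 ->
  forall p : R, 1 <= p -> ~ ((f : RN R -> R) \in Lfun mu p%:E).
Proof.
move=> cf fx0 p p1 Lf.
pose c := `|f x0| / 2.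
have c0 : 0 < c by rewrite divr_gt0 // normr_gt0.
have [m [d d0 ball_near]] : exists m, exists2 d, 0 < d &
    cylinder_ball x0 m d `<=` [set x | `|f x0 - f x| < c].
  exact/ptws_nbhs_cylinder_ball/(cvgr_dist_lt _ _ (cf x0) _ c0).
have ball_ge x : cylinder_ball x0 m d x -> c <= `|f x|.
  move=> /ball_near /= fx; have := ler_normD (f x0 - f x) (f x).
  by rewrite subrK /c in fx *; lra.
have := Lfun_measure_ge_lty mu p1 c0 Lf (cylinder_ball_measurable x0 m d)
  ball_ge.
rewrite mu_def; last exact: cylinder_ball_measurable.
by rewrite mu_star_cylinder_ball.
Qed.

Theorem theoremA8 (R : realType) (mu : {measure set RN R -> \bar R})
  (mu_def : forall A : set (RN R), measurable A -> mu A = mu_star A) :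
  (forall (f : (nat -> R) -> R) (x0 : nat -> R),
      continuous (f : {ptws nat -> R} -> R) -> f x0 != 0 ->
      forall p : R, 1 <= p -> ~ ((f : RN R -> R) \in Lfun mu p%:E)) /\
  (forall p : R, 1 <= p -> forall f : (nat -> R) -> R,
      continuous (f : {ptws nat -> R} -> R) ->
      (f : RN R -> R) \in Lfun mu p%:E -> f = (fun _ => 0)).
Proof.
split; first exact: continuous_neq0_notin_Lfun.
move=> p p1 f cf Lf; apply/funext => x0; apply/eqP; apply: contraT => fx0.
by have := continuous_neq0_notin_Lfun R mu mu_def f x0 cf fx0 p p1 Lf.
Qed.
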